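(* Let $A_1,A_2,B_1,B_2\in\mathbb T$ and let $\boldsymbol\mu$ be a ratio set. Assume $A_1\prec^{\boldsymbol\mu}A_2$, $B_1\prec^{\boldsymbol\mu}B_2$, and $\boldsymbol\mu$ witnesses $B_2$. Then $A_1B_1\prec^{\boldsymbol\mu}A_2B_2$.
   Context: $\mathbb T$ is the field of real grid-based transseries over the totally ordered group $\mathfrak G$ of transmonomials; $\operatorname{mag}T$ is the dominant monomial of $T\ne0$. A ratio set is a finite $\boldsymbol\mu\subset\{\mathfrak g\in\mathfrak G:\mathfrak g\prec1\}$; $\boldsymbol\mu^*$ (resp. $\boldsymbol\mu^+$) is the set of products of zero or more (resp. one or more) elements of $\boldsymbol\mu$. Monomials: $\mathfrak m\prec^{\boldsymbol\mu}\mathfrak n$ iff $\mathfrak m/\mathfrak n\in\boldsymbol\mu^+$. Transseries: $A\prec^{\boldsymbol\mu}B$ iff every $\mathfrak a\in\operatorname{supp}A$ satisfies $\mathfrak a\prec^{\boldsymbol\mu}\mathfrak b$ for some $\mathfrak b\in\operatorname{supp}B$. $\boldsymbol\mu$ witnesses nonzero $T$ iff $\operatorname{supp}T\subseteq(\operatorname{mag}T)\boldsymbol\mu^*$. *)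

From HB Require Import structures.
From mathcomp Require Import all_boot all_order all_algebra.
From mathcomp Require Import boolp reals.
Set Implicit Arguments. Unset Strict Implicit. Unset Printing Implicit Defensive.
Import Order.TTheory GRing.Theory Num.Theory.
Local Open Scope ring_scope.

(* A totally ordered abelian group, written multiplicatively (the monomial
   group 𝔊).  [og_le m n] is the asymptotic order  m ≼ n. *)
Record ordAbGroup := OrdAbGroup {
  og_car :> eqType;
  og_mul : og_car -> og_car -> og_car;
  og_one : og_car;
  og_inv : og_car -> og_car;
  og_le : rel og_car;
  og_mulA : associative og_mul;
  og_mulC : commutative og_mul;
  og_mul1 : left_id og_one og_mul;
  og_mulV : left_inverse og_one og_inv og_mul;
  og_le_refl : reflexive og_le;
  og_le_anti : antisymmetric og_le;
  og_le_trans : transitive og_le;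
  og_le_total : total og_le;
  og_le_mul : forall a b c, og_le a b -> og_le (og_mul a c) (og_mul b c) }.

Section Transseries.
Variables (R : realType) (G : ordAbGroup).

Local Notation "x ** y" := (og_mul x y) (at level 40, left associativity).
Local Notation one := (og_one G).

Definition og_lt (m n : G) : bool := og_le m n && (m != n).

Definition og_prod (s : seq G) : G := foldr (@og_mul G) one s.

Definition star (mu : seq G) (g : G) : Prop :=
  exists s : seq G, all (mem mu) s /\ g = og_prod s.

Definition plus (mu : seq G) (g : G) : Prop :=
  exists s : seq G, s != [::] /\ all (mem mu) s /\ g = og_prod s.

Definition ratio_set (mu : seq G) : Prop := forall g, g \in mu -> og_lt g one.

(* series = coefficient functions G -> R ; support *)
Definition supp (A : G -> R) (g : G) : Prop := A g != 0.

Definition grid_based (A : G -> R) : Prop :=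
  exists (n : G) (ms : seq G), ratio_set ms /\
    forall g, supp A g -> exists2 r, star ms r & g = n ** r.

Definition is_mag (T : G -> R) (m : G) : Prop :=
  supp T m /\ forall g, supp T g -> og_le g m.

Definition mprec (mu : seq G) (m n : G) : Prop :=
  exists2 u, plus mu u & m = n ** u.

Definition sprec (mu : seq G) (A B : G -> R) : Prop :=
  forall a, supp A a -> exists2 b, supp B b & mprec mu a b.

Definition witnesses (mu : seq G) (T : G -> R) : Prop :=
  (exists g, supp T g) /\
  exists2 m, is_mag T m & forall g, supp T g -> exists2 r, star mu r & g = m ** r.

(* product of series: coefficient at g is the (finite, for grid-based
   series) sum of A a * B b over the pairs (a,b) of support monomials
   with a b = g. *)
Definition pairs_spec (A B : G -> R) (g : G) (s : seq (G * G)) : Prop :=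
  uniq s /\ forall p : G * G,
    p \in s <-> (p.1 ** p.2 = g /\ supp A p.1 /\ supp B p.2).

Definition pairs_of (A B : G -> R) (g : G) : seq (G * G) :=
  match pselect (exists s, pairs_spec A B g s) with
  | left h => projT1 (cid h)
  | right _ => [::]
  end.

Definition smul (A B : G -> R) : G -> R :=
  fun g => \sum_(p <- pairs_of A B g) A p.1 * B p.2.

End Transseries.

(* Write a1 = a2 u and b1 = b2 v with u in mu^+, v in mu^*, and b2 = m r with
   m = mag B2 and r in mu^*.  Among the support monomials a of A2 with
   a2 in a mu^*, choose a maximal one a'; it exists because supp A2 lies in a
   grid, and grids are well-based.  The monomial a' m then occurs in A2 B2 with
   the single contribution A2 a' * B2 m: any other factorization x y = a' m
   forces y = m t with t in mu^*, so x t = a', whence x is a candidate above a',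
   which maximality forbids.  Finally a1 b1 = (a' m) (u t r v) with u t r v in
   mu^+. *)
From mathcomp Require Import all_boot all_order all_algebra.
From mathcomp Require Import boolp reals.
Set Implicit Arguments. Unset Strict Implicit. Unset Printing Implicit Defensive.

Section OrderedGroup.
Variable G : ordAbGroup.
Local Notation "x ** y" := (@og_mul G x y) (at level 40, left associativity).
Local Notation one := (og_one G).
Local Notation le := (@og_le G).

Lemma og_mulr1 (x : G) : x ** one = x.
Proof. by rewrite og_mulC og_mul1. Qed.

Lemma og_mulCA (x y z : G) : x ** (y ** z) = y ** (x ** z).
Proof. by rewrite !og_mulA (og_mulC x). Qed.

Lemma og_mulAC (x y z : G) : x ** y ** z = x ** z ** y.
Proof. by rewrite -!og_mulA (og_mulC y). Qed.

Lemma og_mulIr (z x y : G) : x ** z = y ** z -> x = y.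
Proof.
move=> /(congr1 (fun w => w ** og_inv z)).
by rewrite -!og_mulA (og_mulC z) og_mulV !og_mulr1.
Qed.

Lemma og_le_mul2l (z x y : G) : le x y -> le (z ** x) (z ** y).
Proof. by rewrite !(og_mulC z); apply: og_le_mul. Qed.

Lemma og_le_mulr1 (x t : G) : le t one -> le (x ** t) x.
Proof. by move=> /(og_le_mul2l x); rewrite og_mulr1. Qed.

Lemma og_prod_cat (s1 s2 : seq G) : og_prod (s1 ++ s2) = og_prod s1 ** og_prod s2.
Proof.
elim: s1 => [|a s IH]; first by rewrite og_mul1.
by rewrite /og_prod /= -!/(og_prod _) IH og_mulA.
Qed.

Lemma og_prod_le1 (s : seq G) : {in s, forall a, le a one} -> le (og_prod s) one.
Proof.
elim: s => [|a s IH] s_le1; first exact: og_le_refl.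
have /IH prod_le1 : {in s, forall b, le b one}.
  by move=> b b_s; apply: s_le1; rewrite inE b_s orbT.
apply: og_le_trans (og_le_mul _ (s_le1 a (mem_head _ _))) _.
by rewrite og_mul1.
Qed.

Definition og_pow (m : G) (j : nat) : G := og_prod (nseq j m).

Lemma og_powD (m : G) i j : og_pow m (i + j) = og_pow m i ** og_pow m j.
Proof. by rewrite /og_pow nseqD og_prod_cat. Qed.

Lemma og_pow_le1 (m : G) j : le m one -> le (og_pow m j) one.
Proof. by move=> m_le1; apply: og_prod_le1 => a; rewrite mem_nseq => /andP[_ /eqP ->]. Qed.

Lemma star1 (mu : seq G) : star mu one.
Proof. by exists [::]. Qed.

Lemma starM (mu : seq G) x y : star mu x -> star mu y -> star mu (x ** y).
Proof.
move=> [s1 [mu_s1 ->]] [s2 [mu_s2 ->]].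
by exists (s1 ++ s2); rewrite all_cat mu_s1 mu_s2 og_prod_cat.
Qed.

Lemma plus_star (mu : seq G) x : plus mu x -> star mu x.
Proof. by move=> [s [_ h]]; exists s. Qed.

Lemma plusM (mu : seq G) x y : plus mu x -> star mu y -> plus mu (x ** y).
Proof.
move=> [s1 [s1_neq0 [mu_s1 ->]]] [s2 [mu_s2 ->]]; exists (s1 ++ s2).
by rewrite all_cat mu_s1 mu_s2 og_prod_cat; case: s1 s1_neq0 {mu_s1}.
Qed.

Lemma star_le1 (mu : seq G) r : {in mu, forall m, le m one} -> star mu r -> le r one.
Proof. by move=> mu_le1 [s [/allP mu_s ->]]; apply: og_prod_le1 => a /mu_s /mu_le1. Qed.

Lemma star_nil r : star [::] r -> r = one.
Proof. by case=> -[|a s] [//= _ ->]. Qed.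

Lemma star_cons (m : G) ms r :
  star (m :: ms) r -> exists j, exists2 r', star ms r' & r = og_pow m j ** r'.
Proof.
case=> s [+ ->]; elim: s => [|a s IH] /=.
  by move=> _; exists 0%N, one; [exact: star1 | rewrite og_mulr1].
case/andP=> a_mms /IH [j [r' [s' [ms_s' ->]] ->]].
rewrite /og_prod /= -/(og_prod s); case: (eqVneq a m) => [->|a_neq_m].
  by exists j.+1, (og_prod s'); [exists s' | rewrite og_mulA].
exists j, (a ** og_prod s'); last by rewrite og_mulCA.
exists (a :: s') => //=; rewrite ms_s' andbT.
by move: a_mms; rewrite inE (negbTE a_neq_m).
Qed.

Lemma ratio_set_le1 (mu : seq G) : ratio_set mu -> {in mu, forall m, le m one}.
Proof. by move=> rmu m /rmu /andP[]. Qed.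

Definition has_max (P : G -> Prop) : Prop := exists2 x, P x & forall y, P y -> le y x.

Definition well_based (X : G -> Prop) : Prop :=
  forall P : G -> Prop, (forall x, P x -> X x) -> (exists x, P x) -> has_max P.

Lemma well_based_sub (X Y : G -> Prop) :
  (forall x, Y x -> X x) -> well_based X -> well_based Y.
Proof. by move=> YX wbX P PY; apply: wbX => x /PY /YX. Qed.

Lemma well_based1 (n : G) : well_based (eq^~ n).
Proof.
move=> P Pn [x Px]; exists x => // y /Pn ->.
by rewrite (Pn _ Px); exact: og_le_refl.
Qed.

Lemma has_max_bounded (X P : G -> Prop) c :
  well_based X -> P c -> (forall x, P x -> le x c \/ X x) -> has_max P.
Proof.
move=> wbX Pc P_split.
have [[x [Px Xx]]|noX] := pselect (exists x, P x /\ X x); last first.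
  exists c => // y Py; case: (P_split y Py) => // Xy.
  by case: noX; exists y.
have [d [Pd _] d_max] :=
  wbX (fun x => P x /\ X x) (fun _ => @proj2 _ _) (ex_intro _ x (conj Px Xx)).
have [dc|cd] := boolP (le d c).
  exists c => // y Py; case: (P_split y Py) => [//|Xy].
  exact: og_le_trans (d_max y (conj Py Xy)) dc.
have {}cd : le c d by case/orP: (og_le_total c d) cd => // ->.
exists d => // y Py; case: (P_split y Py) => [yc|Xy]; last exact: d_max.
exact: og_le_trans yc cd.
Qed.

Lemma well_basedU (X Y : G -> Prop) :
  well_based X -> well_based Y -> well_based (fun x => X x \/ Y x).
Proof.
move=> wbX wbY P PXY [x0 Px0].
have [[x [Px Xx]]|noX] := pselect (exists x, P x /\ X x); last first.
  apply: wbY (ex_intro _ x0 Px0) => x Px.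
  by case: (PXY x Px) => // Xx; case: noX; exists x.
have [c [Pc _] c_max] := wbX _ (fun _ => @proj2 _ _) (ex_intro _ x (conj Px Xx)).
apply: (has_max_bounded wbY Pc) => y Py.
by case: (PXY y Py) => [Xy|]; [left; apply: c_max|right].
Qed.

Lemma well_based_bigU (X : nat -> G -> Prop) k :
  (forall j, well_based (X j)) -> well_based (fun x => exists2 j, (j < k)%N & X j x).
Proof.
move=> wbX; elim: k => [|k IH].
  by move=> P P0 [x /P0 []].
apply: (well_based_sub _ (well_basedU IH (wbX k))) => x [j].
by rewrite ltnS leq_eqVlt => /orP[/eqP -> | ltjk] Xjx; [right | left; exists j].
Qed.

Definition grid (n : G) (ms : seq G) (x : G) : Prop := exists2 r, star ms r & x = n ** r.

Lemma well_based_grid (ms : seq G) :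
  {in ms, forall m, le m one} -> forall n, well_based (grid n ms).
Proof.
elim: ms => [|m ms IH] ms_le1 n.
  by apply: (well_based_sub _ (@well_based1 n)) => x [r /star_nil -> ->]; rewrite og_mulr1.
have m_le1 : le m one by apply: ms_le1; rewrite mem_head.
have {}IH : forall n, well_based (grid n ms).
  by apply: IH => a a_ms; apply: ms_le1; rewrite inE a_ms orbT.
have grid_cons x : grid n (m :: ms) x ->
    exists j, exists2 y, grid n ms y & x = y ** og_pow m j.
  case=> _ /star_cons[j [r ms_r ->]] ->; exists j, (n ** r); first by exists r.
  by rewrite og_mulCA og_mulC.
move=> P P_grid [x0 Px0].
pose S y := grid n ms y /\ exists j, P (y ** og_pow m j).
have [y0 [_ [j0 Py0]] y0_max] : has_max S.
  apply: (IH n) => [y [] //|].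
  have [j [y1 ms_y1 x0E]] := grid_cons _ (P_grid _ Px0).
  by exists y1; split=> //; exists j; rewrite -x0E.
(* An x = y m^j in P with j >= j0 lies below y0 m^j0 since y <= y0 and
   m <= 1; the finitely many exponents j < j0 give translated grids over ms. *)
apply: (has_max_bounded (well_based_bigU (k := j0) (fun j => IH (n ** og_pow m j))) Py0).
move=> x Px; have [j [y [r ms_r yE] xE]] := grid_cons _ (P_grid _ Px).
have [ltjj0|lej0j] := ltnP j j0.
  by right; exists j => //; exists r; rewrite // xE yE og_mulAC.
left; have y_le : le y y0 by apply: y0_max; split; [exists r | exists j; rewrite -xE].
rewrite xE -(subnKC lej0j) og_powD og_mulA.
apply: og_le_trans (og_le_mulr1 _ (og_pow_le1 _ m_le1)) _.
exact: og_le_mul.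
Qed.

End OrderedGroup.

Section SeriesProduct.
Variables (R : realType) (G : ordAbGroup).
Local Notation "x ** y" := (@og_mul G x y) (at level 40, left associativity).

Lemma supp_smul (A B : G -> R) g :
  supp (smul A B) g -> exists a b, [/\ supp A a, supp B b & g = a ** b].
Proof.
rewrite /supp /smul /pairs_of; case: pselect => [h|_]; last by rewrite big_nil eqxx.
case: (cid h) => -[|p s] [_ pairs_s] /=; first by rewrite big_nil eqxx.
by have [gE [Ap Bp]] := (pairs_s p).1 (mem_head _ _); exists p.1, p.2.
Qed.

Lemma supp_smul_unique (A B : G -> R) a b :
  supp A a -> supp B b ->
  (forall x y, supp A x -> supp B y -> x ** y = a ** b -> x = a /\ y = b) ->
  supp (smul A B) (a ** b).
Proof.
move=> Aa Bb ab_unique.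
have ab_spec : pairs_spec A B (a ** b) [:: (a, b)].
  split=> // -[x y]; rewrite mem_seq1; split; first by move=> /eqP[-> ->].
  by case=> /= xyE [Ax By]; have [-> ->] := ab_unique x y Ax By xyE.
rewrite /supp /smul /pairs_of; case: pselect => [h|]; last by case; exists [:: (a, b)].
case: (cid h) => s [uniq_s pairs_s] /=.
have s_ab : perm_eq s [:: (a, b)].
  apply: uniq_perm => // p; apply/idP/idP => p_in.
    exact/(ab_spec.2 p).2/(pairs_s p).1.
  exact/(pairs_s p).2/(ab_spec.2 p).1.
by rewrite (perm_big _ s_ab) big_seq1 GRing.mulf_neq0.
Qed.

Lemma supp_smul_mag (mu : seq G) (A B : G -> R) m a :
  ratio_set mu -> grid_based A -> is_mag B m ->
  (forall g, supp B g -> exists2 r, star mu r & g = m ** r) -> supp A a ->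
  exists a' t, [/\ star mu t, a = a' ** t & supp (smul A B) (a' ** m)].
Proof.
move=> /ratio_set_le1 mu_le1 [n [ms [/ratio_set_le1 ms_le1 A_grid]]] [Bm _] B_mu Aa.
pose P x := supp A x /\ exists2 t, star mu t & a = x ** t.
have [a' [Aa' [t mu_t aE]] a'_max] : has_max P.
  apply: (well_based_grid (n := n) ms_le1) => [x [/A_grid] //|].
  by exists a; split => //; exists (og_one G); [exact: star1 | rewrite og_mulr1].
exists a', t; split => //; apply: supp_smul_unique => // x y Ax /B_mu[t' mu_t' ->] xyE.
have a'E : x ** t' = a' by apply: (@og_mulIr _ m); rewrite -xyE og_mulA og_mulAC.
have xa' : x = a'.
  apply: og_le_anti; rewrite a'_max; last first.
    by split=> //; exists (t' ** t); [exact: starM | rewrite aE -a'E og_mulA].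
  by rewrite -a'E og_le_mulr1 // (star_le1 mu_le1 mu_t').
have -> : t' = og_one G by apply: (@og_mulIr _ x); rewrite og_mulC a'E og_mul1 xa'.
by rewrite og_mulr1.
Qed.

End SeriesProduct.

Theorem proposition3p8 (R : realType) (G : ordAbGroup) (mu : seq G)
    (A1 A2 B1 B2 : G -> R) :
  grid_based A1 -> grid_based A2 -> grid_based B1 -> grid_based B2 ->
  ratio_set mu ->
  sprec mu A1 A2 -> sprec mu B1 B2 -> witnesses mu B2 ->
  sprec mu (smul A1 B1) (smul A2 B2).
Proof.
move=> _ A2_grid _ _ rmu A12 B12 [_ [m B2m B2_mu]] g /supp_smul[a1 [b1 [A1a1 B1b1 ->]]].
have [a2 A2a2 [u mu_u ->]] := A12 _ A1a1.
have [b2 B2b2 [v mu_v ->]] := B12 _ B1b1.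
have [r mu_r ->] := B2_mu _ B2b2.
have [a' [t [mu_t -> A2B2]]] := supp_smul_mag rmu A2_grid B2m B2_mu A2a2.
exists (og_mul a' m) => //; exists (og_mul u (og_mul t (og_mul r v))).
  by apply: plusM => //; do 2 apply: starM => //; exact: plus_star.
by rewrite -!og_mulA; congr og_mul; rewrite (og_mulCA u m) (og_mulCA t m) (og_mulCA t u).
Qed.
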